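(* Let $P$ be a rectangular box (brick) in $\mathbb{R}^3$ of volume $1$, all of whose edge lengths are at least $\frac{1}{\sqrt{2}}$. Let $e_1,e_2,e_3$ be three pairwise skew edges of $P$, and let $A\in e_1$, $B\in e_2$, $C\in e_3$ be the vertices of a regular (equilateral) triangle. Then the side length of the triangle $ABC$ is at most $\sqrt{2}$.
   Context: A brick is a rectangular parallelepiped (box with pairwise orthogonal edge directions). Edges of the brick are its twelve closed edge segments. Three edges are pairwise skew if no two of them are parallel and no two intersect; in a brick such a triple consists of one edge from each of the three edge directions. ''The vertices of a triangle lie on the skew edges of the brick'' means each vertex lies on a different edge of such a triple. *)

From HB Require Import structures.
From mathcomp Require Import all_boot all_order all_algebra.
From mathcomp Require Import reals.
Set Implicit Arguments. Unset Strict Implicit. Unset Printing Implicit Defensive.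
Import Order.TTheory GRing.Theory Num.Theory.
Local Open Scope ring_scope.

Definition dot (R : realType) (x y : 'rV[R]_3) : R := \sum_(i < 3) x 0 i * y 0 i.

Definition enorm (R : realType) (x : 'rV[R]_3) : R := Num.sqrt (dot x x).
Definition dist (R : realType) (x y : 'rV[R]_3) : R := enorm (x - y).

(* A brick is given by a vertex O and three pairwise orthogonal nonzero edge
   vectors f 0, f 1, f 2; it is { O + sum_j t_j f j | t_j in [0,1] }. *)
Definition is_brick (R : realType) (f : 'I_3 -> 'rV[R]_3) : Prop :=
  (forall i, f i != 0) /\ (forall i j, i != j -> dot (f i) (f j) = 0).

Definition brick_volume (R : realType) (f : 'I_3 -> 'rV[R]_3) : R :=
  \prod_(i < 3) enorm (f i).

(* The edge of the brick in direction i, whose other coordinates (in the frame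
   f, relative to O) are given by the bits b j, j != i (b i is irrelevant). *)
Definition brick_edge (R : realType) (O : 'rV[R]_3) (f : 'I_3 -> 'rV[R]_3)
    (i : 'I_3) (b : 'I_3 -> bool) : 'rV[R]_3 -> Prop :=
  fun P => exists l : R, 0 <= l <= 1 /\
    P = O + \sum_(j < 3 | j != i) (b j)%:R *: f j + l *: f i.

Definition meets (R : realType) (E F : 'rV[R]_3 -> Prop) : Prop :=
  exists P, E P /\ F P.

From HB Require Import structures.
From mathcomp Require Import all_boot all_order all_algebra.
From mathcomp Require Import reals.
From mathcomp Require Import ring lra.
Import Order.TTheory GRing.Theory Num.Theory.
Set Implicit Arguments. Unset Strict Implicit.
Local Open Scope ring_scope.

(* Let A, B, C be the squared lengths of the edges of the brick in the
   directions of the three skew edges, so that A, B, C >= 1/2 and ABC = 1, and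
   let x, y, z in [0, 1] locate the vertices of the triangle on these edges,
   each measured from a suitably chosen end.  The squared sides are then
     A x^2 + B y^2 + C,   A + B (1 - y)^2 + C z^2,   A (1 - x)^2 + B + C (1 - z)^2,
   and it suffices to show that they cannot all exceed 2.  From a point inside
   the cube of parameters one can move in a direction along which none of the
   three decreases, so a counterexample could be pushed onto a face.  The
   symmetries of the configuration carry every face to the face x = 0, which is
   excluded by a case analysis on C and A + B, using polynomial inequalities
   that follow from explicit certificates. *)

Definition admissible {R : realFieldType} (A B C : R) :=
  [/\ 1/2 <= A, 1/2 <= B, 1/2 <= C & A * B * C = 1].

Section PolynomialBounds.
Variable R : realFieldType.
Implicit Types A B C U : R.

Lemma admissible_perm A B C : admissible A B C ->
  admissible A C B /\ admissible B A C.
Proof. by case=> hA hB hC hp; split; split=> //; rewrite -hp; ring. Qed.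

Lemma mul_gt1_of_sum_ge2 A B C :
  1/2 <= A -> 1/2 <= B -> 2 <= A + B -> 2 <= C -> 1 < A * B * C.
Proof.
move=> hA hB hAB hC.
have : 0 <= (A - 1/2) * (B - 1/2) by apply: mulr_ge0; lra.
have : 0 <= A * B * (C - 2) by apply: mulr_ge0; [apply: mulr_ge0|]; lra.
nra.
Qed.

Lemma four_mul_sub_ge1 A B :
  1/2 <= A -> 1/2 <= B -> A * B <= 1/2 -> 1 <= 4 * A * B * (2 - A - B).
Proof.
move=> hA hB hAB.
have hA1 : A <= 1 by nra.
have hB1 : B <= 1 by nra.
nra.
Qed.

Lemma middle_ge1 A B C : admissible A B C -> 2 <= A + B -> 2 < B + C -> 1 <= B.
Proof.
case=> hA hB hC hp h1 h2; rewrite leNgt; apply/negP => hB1.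
have : 0 <= (A - (2 - B)) * C by apply: mulr_ge0; lra.
have : 0 < (2 - B) * (C - (2 - B)) by apply: mulr_gt0; lra.
have : 0 < B * (A * C - (2 - B) ^+ 2) by apply: mulr_gt0; nra.
have : 0 <= (1 - B) * (- (B ^+ 2 - 3 * B + 1)) by apply: mulr_ge0; nra.
nra.
Qed.

Lemma sum_sq_poly_ge0_le32 A B : 1 <= B -> B <= 3/2 -> 2 - B <= A ->
  A * (B * (2 - B)) <= 1 -> 0 <= 8 * A * B - 4 - A * (A + B) ^+ 2.
Proof.
move=> hB1 hB2 hA hAD.
set D := B * (2 - B) in hAD *.
have hD : 0 < D by apply: mulr_gt0; lra.
have hq : 0 < 3 * B - B ^+ 2 - 1 by nra.
have hBD : 0 <= B * D by apply: mulr_ge0; lra.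
have hDA : 0 <= D * A by apply: mulr_ge0; lra.
have hBD' : 0 <= (2 - B) * D by apply: mulr_ge0; lra.
have t1 : 0 <= 4 * (3 - 2 * B) * D ^+ 2 * (1 - A * D).
  by apply: mulr_ge0; [apply: mulr_ge0; [lra | exact: sqr_ge0] | lra].
have t2 : 0 <= (1 + B - B ^+ 2) * (2 * B * D + (1 + B * D)) * (A - (2 - B)).
  by apply: mulr_ge0; [apply: mulr_ge0; [nra | lra] | lra].
have t3 : 0 <= (3 * B - B ^+ 2 - 1) * (A - (2 - B)) * (1 - A * D)
               * (D * A + 2 * B * D + (2 - B) * D + 1).
  by apply: mulr_ge0; [apply: mulr_ge0; [apply: mulr_ge0|]|]; lra.
have e : D ^+ 2 * (3 * B - B ^+ 2 - 1) * (8 * A * B - 4 - A * (A + B) ^+ 2) =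
    4 * (3 - 2 * B) * D ^+ 2 * (1 - A * D)
  + (1 + B - B ^+ 2) * (2 * B * D + (1 + B * D)) * (A - (2 - B))
  + (3 * B - B ^+ 2 - 1) * (A - (2 - B)) * (1 - A * D)
    * (D * A + 2 * B * D + (2 - B) * D + 1) by rewrite /D; ring.
have : 0 <= D ^+ 2 * (3 * B - B ^+ 2 - 1) * (8 * A * B - 4 - A * (A + B) ^+ 2).
  by rewrite e; lra.
by rewrite pmulr_rge0 // mulr_gt0 // exprn_gt0.
Qed.

Lemma sum_sq_poly_ge0_ge32 A B : 3/2 <= B -> 1/2 <= A -> A * B <= 2 ->
  0 <= 8 * A * B - 4 - A * (A + B) ^+ 2.
Proof.
move=> hB hA hAB.
have [hB4|hB4] := ltrP B 4; last first.
  have eB : B = 4 by nra.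
  have eA : A = 1/2 by rewrite eB in hAB; lra.
  by rewrite eA eB; lra.
have hG : 0 <= - (B ^+ 4 - 6 * B ^+ 3 + 4 * B ^+ 2 + 4).
  have : 0 <= (B - 3/2) * (4 - B) by apply: mulr_ge0; lra.
  nra.
have t1 : 0 <= 2 * B ^+ 2 * (2 * B - 3) * (11 - 2 * B) * (2 - A * B).
  by do 3 (apply: mulr_ge0; last lra); apply: mulr_ge0; [lra | exact: sqr_ge0].
have t2 : 0 <= 32 * (- (B ^+ 4 - 6 * B ^+ 3 + 4 * B ^+ 2 + 4)) * (A - 1/2).
  by apply: mulr_ge0; [apply: mulr_ge0 | ]; lra.
have t3 : 0 <= (4 - B) * (A - 1/2) * (2 - A * B) * (8 * A * B + 16 * B ^+ 2 + 4 * B + 16).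
  by apply: mulr_ge0; [apply: mulr_ge0; [apply: mulr_ge0|] | nra]; lra.
have e : 8 * B ^+ 2 * (4 - B) * (8 * A * B - 4 - A * (A + B) ^+ 2) =
    2 * B ^+ 2 * (2 * B - 3) * (11 - 2 * B) * (2 - A * B)
  + 32 * (- (B ^+ 4 - 6 * B ^+ 3 + 4 * B ^+ 2 + 4)) * (A - 1/2)
  + (4 - B) * (A - 1/2) * (2 - A * B) * (8 * A * B + 16 * B ^+ 2 + 4 * B + 16).
  by field.
have : 0 <= 8 * B ^+ 2 * (4 - B) * (8 * A * B - 4 - A * (A + B) ^+ 2).
  by rewrite e; lra.
rewrite pmulr_rge0 // mulr_gt0 //; last lra.
by rewrite mulr_gt0 // exprn_gt0 //; lra.
Qed.

Lemma sum_sq_le A B C : admissible A B C -> 2 <= A + B -> C < 2 -> 2 < B + C ->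
  (A + B) ^+ 2 <= 4 * B * (2 - C).
Proof.
move=> hABC hAB hC2 hBC; have [hA hB hC hp] := hABC.
have hB1 := middle_ge1 hABC hAB hBC.
have hkey : 0 <= 8 * A * B - 4 - A * (A + B) ^+ 2.
  have [hB32|hB32] := lerP B (3/2).
    apply: sum_sq_poly_ge0_le32 => //; first lra.
    have : 0 < A * B * (C - (2 - B)) by apply: mulr_gt0; [apply: mulr_gt0|]; lra.
    nra.
  apply: sum_sq_poly_ge0_ge32 => //; first lra.
  have : 0 <= A * B * (C - 1/2) by apply: mulr_ge0; [apply: mulr_ge0|]; lra.
  nra.
have e : A * (4 * B * (2 - C) - (A + B) ^+ 2) =
         8 * A * B - 4 * (A * B * C) - A * (A + B) ^+ 2 by ring.
rewrite hp mulr1 in e.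
have : 0 <= A * (4 * B * (2 - C) - (A + B) ^+ 2) by rewrite e.
by rewrite pmulr_rge0; lra.
Qed.

Lemma sub1_sq_le A B C : admissible A B C -> B <= 1 -> 2 < B + C -> C < 2 ->
  (C - 1) ^+ 2 <= C * (2 - A - B).
Proof.
case=> hA hB hC hp hB1 hBC hC2.
have : 0 <= B * ((C - 2 + B) * (2 - C)) by apply: mulr_ge0; [|apply: mulr_ge0]; lra.
have : 0 <= (2 * B - 1) * (1 - B) by apply: mulr_ge0; lra.
have e : B * (C * (2 - A - B) - (C - 1) ^+ 2) =
         4 * B * C - A * B * C - B ^+ 2 * C - B * C ^+ 2 - B by ring.
rewrite hp in e.
move=> k1 k2; have : 0 <= B * (C * (2 - A - B) - (C - 1) ^+ 2) by rewrite e; nra.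
by rewrite pmulr_rge0; lra.
Qed.

Lemma cross_sum_ge1 A B C : admissible A B C -> 1 <= B -> A + B < 2 ->
  1 <= B * (2 - C) + C * (2 - A - B) + 2 * (2 - C) * (2 - A - B).
Proof.
case=> hA _ _ hp hB1 hAB.
have hC : 0 < C.
  by rewrite -(pmulr_rgt0 _ (_ : 0 < A * B)) ?hp //; apply: mulr_gt0; lra.
have k1p : 0 < B * (2 - B) * C - 1.
  have : 0 < B * C * (2 - A - B) by apply: mulr_gt0; [apply: mulr_gt0|]; lra.
  nra.
have k2p : 0 <= 2 - B * C.
  have : 0 <= B * C * (A - 1/2) by apply: mulr_ge0; [apply: mulr_ge0|]; lra.
  nra.
have : 0 <= (B * (2 - B) * C - 1) * (2 - B * C) by apply: mulr_ge0; lra.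
have : 0 <= (B - 1) * (2 - B) * (B * (2 - B) * C - 1).
  by apply: mulr_ge0; [apply: mulr_ge0|]; lra.
have : 0 <= B * (B - 1) * (2 - B * C) by apply: mulr_ge0; [apply: mulr_ge0|]; lra.
move=> k3 k2 k1.
have hpoly : 0 <= 7 * B * C - 2 * B ^+ 2 * C - 2 * B * C ^+ 2 - 4 + C.
  have : 0 <= B * (2 - B) * (7 * B * C - 2 * B ^+ 2 * C - 2 * B * C ^+ 2 - 4 + C) by nra.
  by rewrite pmulr_rge0 // mulr_gt0 //; lra.
have e : B * C * (B * (2 - C) + C * (2 - A - B) + 2 * (2 - C) * (2 - A - B) - 1) =
    7 * B * C - 2 * B ^+ 2 * C - 2 * B * C ^+ 2 - 4 * (A * B * C) + C * (A * B * C).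
  by ring.
rewrite hp !mulr1 in e.
have : 0 <= B * C * (B * (2 - C) + C * (2 - A - B) + 2 * (2 - C) * (2 - A - B) - 1).
  by rewrite e.
by rewrite pmulr_rge0 ?mulr_gt0 //; lra.
Qed.

Lemma mul_sqr_le B U : 0 <= B -> 0 <= U -> U <= 1 -> B * U ^+ 2 <= B.
Proof. by move=> B0 U0 U1; apply: ler_piMr => //; nra. Qed.

End PolynomialBounds.

Definition long_sides {R : realFieldType} (A B C x y z : R) :=
  [/\ 2 < A * x ^+ 2 + B * y ^+ 2 + C,
      2 < A + B * (1 - y) ^+ 2 + C * z ^+ 2 &
      2 < A * (1 - x) ^+ 2 + B + C * (1 - z) ^+ 2].

Section Symmetries.
Variable R : realFieldType.
Implicit Types A B C x y z t : R.

Lemma long_sides_reflect A B C x y z :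
  long_sides A B C x y z -> long_sides A C B (1 - x) (1 - z) (1 - y).
Proof. by case=> h1 h2 h3; split; lra. Qed.

Lemma long_sides_swap A B C x y z :
  long_sides A B C x y z -> long_sides B A C y x (1 - z).
Proof. by case=> h1 h2 h3; split; lra. Qed.

Lemma unit_compl x : 0 <= x <= 1 -> 0 <= 1 - x <= 1.
Proof. by case/andP=> x0 x1; apply/andP; split; lra. Qed.

Lemma long_sides_deform A B C x y z t : 0 <= A -> 0 <= B -> 0 <= C -> 0 <= t ->
  0 <= x * (1 - y) * (1 - z) - (1 - x) * y * z ->
  long_sides A B C x y z ->
  long_sides A B C (x + t * (B * C * y * z)) (y - t * (A * C * x * z))
                   (z - t * (A * B * x * (1 - y))).
Proof.
(* In this direction the first-order variations of the first two squared sides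
   cancel, and that of the third is 2 t A B C times the quantity assumed
   nonnegative. *)
move=> A0 B0 C0 t0 hK [h1 h2 h3].
have sq (M u : R) : 0 <= M -> 0 <= M * (t * u) ^+ 2 by move=> M0; rewrite mulr_ge0 ?sqr_ge0.
have := sq A (B * C * y * z) A0; have := sq B (A * C * x * z) B0.
have := sq C (A * B * x * (1 - y)) C0.
have : 0 <= t * (A * B * C) * (x * (1 - y) * (1 - z) - (1 - x) * y * z).
  by rewrite !mulr_ge0.
by move=> *; split; lra.
Qed.

Lemma min3_attained (a b c : R) :
  exists2 t, [/\ t <= a, t <= b & t <= c] & [\/ t = a, t = b | t = c].
Proof.
have [ab|ab] := lerP a b; have [ac|ac] := lerP a c; have [bc|bc] := lerP b c;
  first [by exists a; [split; lra | constructor 1]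
        | by exists b; [split; lra | constructor 2]
        | by exists c; [split; lra | constructor 3]].
Qed.

Lemma long_sides_push A B C x y z : admissible A B C ->
  0 < x < 1 -> 0 < y < 1 -> 0 < z < 1 ->
  0 <= x * (1 - y) * (1 - z) - (1 - x) * y * z -> long_sides A B C x y z ->
  exists x' y' z', [/\ 0 <= x' <= 1, 0 <= y' <= 1, 0 <= z' <= 1,
    [\/ x' = 1, y' = 0 | z' = 0] & long_sides A B C x' y' z'].
Proof.
case=> hA hB hC _ /andP[x0 x1] /andP[y0 y1] /andP[z0 z1] hK hlong.
have DX0 : 0 < B * C * y * z by rewrite !mulr_gt0 //; lra.
have DY0 : 0 < A * C * x * z by rewrite !mulr_gt0 //; lra.
have DZ0 : 0 < A * B * x * (1 - y) by rewrite !mulr_gt0 //; lra.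
have [t [tx ty tz] ht] :=
  min3_attained ((1 - x) / (B * C * y * z)) (y / (A * C * x * z))
                (z / (A * B * x * (1 - y))).
have t0 : 0 <= t by case: ht => ->; rewrite divr_ge0 //; lra.
rewrite ler_pdivlMr // in tx; rewrite ler_pdivlMr // in ty; rewrite ler_pdivlMr // in tz.
have [gx gy gz] : [/\ 0 <= t * (B * C * y * z), 0 <= t * (A * C * x * z)
                       & 0 <= t * (A * B * x * (1 - y))].
  by split; apply: mulr_ge0 => //; apply: ltW.
exists (x + t * (B * C * y * z)), (y - t * (A * C * x * z)),
       (z - t * (A * B * x * (1 - y))).
split; try (apply/andP; split; lra).
  by case: ht => ->; [constructor 1 | constructor 2 | constructor 3];
    rewrite divfK ?gt_eqF //; ring.
by apply: long_sides_deform => //; lra.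
Qed.

End Symmetries.

Section SqrtBounds.
Variable R : rcfType.
Implicit Types a x B S Y : R.

Lemma le_sqrt_of_sqr x a : x ^+ 2 <= a -> x <= Num.sqrt a.
Proof.
move=> h; have [x0|x0] := ltrP x 0; first exact: (ltW (lt_le_trans x0 (sqrtr_ge0 a))).
by rewrite -(ler_sqr (x := x)) ?nnegrE ?sqrtr_ge0 // sqr_sqrtr // (le_trans _ h) ?sqr_ge0.
Qed.

Lemma sqr_split_lt B S U V : 0 <= S -> 0 <= U -> 0 <= V -> U + V = 1 ->
  S < B * U ^+ 2 -> B * V ^+ 2 < B + S - 2 * Num.sqrt (B * S).
Proof.
move=> S0 U0 V0 hUV hS.
have B0 : 0 <= B by have := sqr_ge0 U; nra.
set b := Num.sqrt B; set s := Num.sqrt S.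
have [b0 s0] : 0 <= b /\ 0 <= s by split; apply: sqrtr_ge0.
have hb : B = b ^+ 2 by rewrite sqr_sqrtr.
have hs : S = s ^+ 2 by rewrite sqr_sqrtr.
have sU : s < b * U by rewrite -(ltr_sqr (x := s)) ?nnegrE ?mulr_ge0 // exprMn -hb -hs.
rewrite sqrtrM // -/b -/s hb hs.
have : 0 <= b * V < b - s by apply/andP; split; [apply: mulr_ge0 | nra].
nra.
Qed.

End SqrtBounds.

Section ShortSide.
Variable R : rcfType.
Implicit Types A B C x y z : R.

Lemma not_long_sides_x0_C_ge2 A B C y z : admissible A B C ->
  0 <= y <= 1 -> 0 <= z <= 1 -> 2 <= C -> ~ long_sides A B C 0 y z.
Proof.
case=> hA hB hC hp /andP[y0 y1] /andP[z0 z1] hC2 [side1 side2 side3].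
have [hAB|hAB] := lerP 2 (A + B).
  by have := mul_gt1_of_sum_ge2 hA hB hAB hC2; rewrite hp ltxx.
have hAB2 : A * B <= 1/2.
  have : 0 <= A * B * (C - 2) by apply: mulr_ge0; [apply: mulr_ge0|]; lra.
  nra.
have h4 := four_mul_sub_ge1 hA hB hAB2.
have hC4 : C ^+ 2 <= 4 * (C * (2 - A - B)).
  have : C * 1 <= C * (4 * A * B * (2 - A - B)) by rewrite ler_pM2l //; lra.
  have -> : C * (4 * A * B * (2 - A - B)) = 4 * (A * B * C) * (2 - A - B) by ring.
  rewrite hp; nra.
have hsq : C / 2 <= Num.sqrt (C * (2 - A - B)) by apply: le_sqrt_of_sqr; lra.
have : C * z ^+ 2 < C + (2 - A - B) - 2 * Num.sqrt (C * (2 - A - B)).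
  by apply: (sqr_split_lt (U := 1 - z)); rewrite ?subrK //; lra.
have : B * (1 - y) ^+ 2 <= B by apply: mul_sqr_le; lra.
lra.
Qed.

Lemma not_long_sides_x0_AB_ge2 A B C y z : admissible A B C ->
  0 <= y <= 1 -> 0 <= z <= 1 -> C < 2 -> 2 <= A + B -> ~ long_sides A B C 0 y z.
Proof.
move=> hABC /andP[y0 y1] /andP[z0 z1] hC2 hAB [side1 side2 side3].
have [hA hB hC hp] := hABC.
have hBY : B * y ^+ 2 <= B by apply: mul_sqr_le; lra.
have hBC : 2 < B + C by lra.
have hsq : (A + B) / 2 <= Num.sqrt (B * (2 - C)).
  by apply: le_sqrt_of_sqr; have := sum_sq_le hABC hAB hC2 hBC; lra.
have : B * (1 - y) ^+ 2 < B + (2 - C) - 2 * Num.sqrt (B * (2 - C)).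
  by apply: (sqr_split_lt (U := y)); rewrite ?subrKC //; lra.
have : C * z ^+ 2 <= C by apply: mul_sqr_le; lra.
lra.
Qed.

Lemma not_long_sides_x0_AB_lt2 A B C y z : admissible A B C ->
  0 <= y <= 1 -> 0 <= z <= 1 -> C < 2 -> A + B < 2 -> ~ long_sides A B C 0 y z.
Proof.
move=> hABC /andP[y0 y1] /andP[z0 z1] hC2 hAB [side1 side2 side3].
have [hA hB hC hp] := hABC.
have hBY : B * y ^+ 2 <= B by apply: mul_sqr_le; lra.
have hCZ : C * (1 - z) ^+ 2 <= C by apply: mul_sqr_le; lra.
set u := Num.sqrt (B * (2 - C)); set v := Num.sqrt (C * (2 - A - B)).
have : B * (1 - y) ^+ 2 < B + (2 - C) - 2 * u.
  by apply: (sqr_split_lt (U := y)); rewrite ?subrKC //; lra.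
have : C * z ^+ 2 < C + (2 - A - B) - 2 * v.
  by apply: (sqr_split_lt (U := 1 - z)); rewrite ?subrK //; lra.
move=> hv hu; suff : 1 <= u + v by lra.
have hSu : 2 - C <= u by apply: le_sqrt_of_sqr; rewrite expr2; apply: ler_wpM2r; lra.
have hTv : 2 - A - B <= v by apply: le_sqrt_of_sqr; rewrite expr2; apply: ler_wpM2r; lra.
have [hB1|hB1] := lerP B 1.
  have : C - 1 <= v by apply/le_sqrt_of_sqr/sub1_sq_le => //; lra.
  lra.
have huv : (2 - C) * (2 - A - B) <= u * v by apply: ler_pM; lra.
have eu : u ^+ 2 = B * (2 - C) by rewrite sqr_sqrtr //; apply: mulr_ge0; lra.
have ev : v ^+ 2 = C * (2 - A - B) by rewrite sqr_sqrtr //; apply: mulr_ge0; lra.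
have := cross_sum_ge1 hABC (ltW hB1) hAB; rewrite -eu -ev => hsum.
have : 1 <= (u + v) ^+ 2 by lra.
by rewrite -[X in X <= _](expr1n _ 2) ler_sqr // nnegrE; lra.
Qed.

Lemma not_long_sides_x0 A B C y z : admissible A B C -> 0 <= y <= 1 -> 0 <= z <= 1 ->
  ~ long_sides A B C 0 y z.
Proof.
move=> hABC hy hz.
have [hC2|hC2] := lerP 2 C; first exact: not_long_sides_x0_C_ge2.
have [hAB|hAB] := lerP 2 (A + B); first exact: not_long_sides_x0_AB_ge2.
exact: not_long_sides_x0_AB_lt2.
Qed.

Lemma not_long_sides_x1 A B C y z : admissible A B C -> 0 <= y <= 1 -> 0 <= z <= 1 ->
  ~ long_sides A B C 1 y z.
Proof.
move=> /admissible_perm[hACB _] hy hz /long_sides_reflect; rewrite subrr.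
by apply: not_long_sides_x0; rewrite ?unit_compl.
Qed.

Lemma not_long_sides_y0 A B C x z : admissible A B C -> 0 <= x <= 1 -> 0 <= z <= 1 ->
  ~ long_sides A B C x 0 z.
Proof.
move=> /admissible_perm[_ hBAC] hx hz /long_sides_swap.
by apply: not_long_sides_x0; rewrite ?unit_compl.
Qed.

Lemma not_long_sides_y1 A B C x z : admissible A B C -> 0 <= x <= 1 -> 0 <= z <= 1 ->
  ~ long_sides A B C x 1 z.
Proof.
move=> /admissible_perm[_ hBAC] hx hz /long_sides_swap.
by apply: not_long_sides_x1; rewrite ?unit_compl.
Qed.

Lemma not_long_sides_z0 A B C x y : admissible A B C -> 0 <= x <= 1 -> 0 <= y <= 1 ->
  ~ long_sides A B C x y 0.
Proof.
move=> /admissible_perm[hACB _] hx hy /long_sides_reflect; rewrite subr0.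
by apply: not_long_sides_y1; rewrite ?unit_compl.
Qed.

Lemma not_long_sides_z1 A B C x y : admissible A B C -> 0 <= x <= 1 -> 0 <= y <= 1 ->
  ~ long_sides A B C x y 1.
Proof.
move=> /admissible_perm[hACB _] hx hy /long_sides_reflect; rewrite subrr.
by apply: not_long_sides_y0; rewrite ?unit_compl.
Qed.

Lemma not_long_sides A B C x y z : admissible A B C ->
  0 <= x <= 1 -> 0 <= y <= 1 -> 0 <= z <= 1 -> ~ long_sides A B C x y z.
Proof.
(* long_sides_reflect changes the sign of x (1 - y) (1 - z) - (1 - x) y z. *)
wlog hK : A B C x y z / 0 <= x * (1 - y) * (1 - z) - (1 - x) * y * z.
  move=> wlog hABC hx hy hz.
  have [hK|hK] := lerP 0 (x * (1 - y) * (1 - z) - (1 - x) * y * z).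
    exact: wlog.
  have [hACB _] := admissible_perm hABC.
  move/long_sides_reflect; apply: wlog; rewrite ?unit_compl //; lra.
move=> hABC hx hy hz.
have [->|x0] := eqVneq x 0; first exact: not_long_sides_x0.
have [->|x1] := eqVneq x 1; first exact: not_long_sides_x1.
have [->|y0] := eqVneq y 0; first exact: not_long_sides_y0.
have [->|y1] := eqVneq y 1; first exact: not_long_sides_y1.
have [->|z0] := eqVneq z 0; first exact: not_long_sides_z0.
have [->|z1] := eqVneq z 1; first exact: not_long_sides_z1.
have strict (u : R) : 0 <= u <= 1 -> u != 0 -> u != 1 -> 0 < u < 1.
  by case/andP=> u0 u1 nu0 nu1; rewrite !lt_neqAle eq_sym nu0 nu1 u0 u1.
move/(long_sides_push hABC (strict _ hx x0 x1) (strict _ hy y0 y1) (strict _ hz z0 z1) hK).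
case=> x' [y' [z' [hx' hy' hz' [] -> hlong]]].
- exact: not_long_sides_x1 hlong.
- exact: not_long_sides_y0 hlong.
- exact: not_long_sides_z0 hlong.
Qed.

End ShortSide.

Lemma ord3_other (i j k m : 'I_3) :
  i != j -> j != k -> i != k -> m != i -> m != j -> m = k.
Proof. by move: i j k m; do 4![case=> [[|[|[|//]]] ?]] => //= *; apply: val_inj. Qed.

Lemma big_ord3_perm (T : Type) (idx : T) (op : Monoid.com_law idx) (g : 'I_3 -> T)
    (i j k : 'I_3) : i != j -> j != k -> i != k ->
  \big[op/idx]_m g m = op (op (g i) (g j)) (g k).
Proof.
move=> ij jk ik.
rewrite (bigD1 i) // (bigD1 j) 1?eq_sym //= (bigD1 k) /=; last by rewrite !(eq_sym k) ik jk.
rewrite big_pred0 => [|m]; first by rewrite Monoid.mulm1 !Monoid.mulmA.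
by apply/negP => /andP[/andP[mi mj] mk]; rewrite (ord3_other ij jk ik mi mj) eqxx in mk.
Qed.

Section Frame.
Variable R : realType.
Implicit Types (u v O : 'rV[R]_3).

Lemma dotC u v : dot u v = dot v u.
Proof. by apply: eq_bigr => i _; rewrite mulrC. Qed.

Lemma dot_ge0 u : 0 <= dot u u.
Proof. by apply: sumr_ge0 => i _; rewrite -expr2 sqr_ge0. Qed.

Lemma dot_sumZl (I : finType) (c : I -> R) (f : I -> 'rV[R]_3) v :
  dot (\sum_k c k *: f k) v = \sum_k c k * dot (f k) v.
Proof.
rewrite /dot; under eq_bigr do rewrite summxE big_distrl.
rewrite exchange_big; apply: eq_bigr => k _; rewrite big_distrr.
by apply: eq_bigr => i _; rewrite mxE /= mulrA.
Qed.

Lemma dot_orthogonal_sum (I : finType) (c d : I -> R) (f : I -> 'rV[R]_3) :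
  (forall i j, i != j -> dot (f i) (f j) = 0) ->
  dot (\sum_k c k *: f k) (\sum_k d k *: f k) = \sum_k c k * d k * dot (f k) (f k).
Proof.
move=> orth; rewrite dot_sumZl; apply: eq_bigr => k _.
rewrite dotC dot_sumZl (bigD1 k) //= big1 => [|j jk]; first by rewrite addr0 mulrA.
by rewrite orth ?mulr0.
Qed.

Lemma dist_frame (I : finType) O (f : I -> 'rV[R]_3) (c d : I -> R) :
  (forall i j, i != j -> dot (f i) (f j) = 0) ->
  dist (O + \sum_k c k *: f k) (O + \sum_k d k *: f k) ^+ 2 =
  \sum_k (c k - d k) ^+ 2 * dot (f k) (f k).
Proof.
move=> orth; rewrite /dist /enorm sqr_sqrtr ?dot_ge0 // opprD addrACA subrr add0r -sumrB.
under eq_bigr do rewrite -scalerBl.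
by rewrite dot_orthogonal_sum //; under eq_bigr do rewrite -expr2.
Qed.

End Frame.

Section Edges.
Variable R : realType.
Implicit Types (O P : 'rV[R]_3) (f : 'I_3 -> 'rV[R]_3) (b : 'I_3 -> bool).

Definition edge_coord (i : 'I_3) b (l : R) (k : 'I_3) : R :=
  if k == i then l else (b k)%:R.

Lemma edge_point_sum O f i b l :
  O + \sum_(j < 3 | j != i) (b j)%:R *: f j + l *: f i =
  O + \sum_k edge_coord i b l k *: f k.
Proof.
rewrite [in RHS](bigD1 i) //= /edge_coord eqxx -addrA [l *: _ + _]addrC.
by congr (O + (_ + _)); apply: eq_bigr => k /negbTE ->.
Qed.

Lemma brick_edgeP O f i b P : brick_edge O f i b P ->
  exists2 l, 0 <= l <= 1 & P = O + \sum_k edge_coord i b l k *: f k.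
Proof. by case=> l [hl ->]; exists l; rewrite ?edge_point_sum. Qed.

Lemma meets_brick_edges O f i j k b b' : i != j -> j != k -> i != k ->
  b k = b' k -> meets (brick_edge O f i b) (brick_edge O f j b').
Proof.
move=> ij jk ik bk.
have bit01 (u : bool) : 0 <= (u%:R : R) <= 1 by case: u; rewrite /= ?lexx ?ler01.
exists (O + \sum_m edge_coord i b (b' i)%:R m *: f m); split.
  by exists (b' i)%:R; rewrite edge_point_sum.
exists (b j)%:R; split; rewrite // edge_point_sum; congr (O + _).
apply: eq_bigr => m _; congr (_ *: _); rewrite /edge_coord.
have [->|mi] := eqVneq m i; first by rewrite (negbTE ij).
have [->|mj] := eqVneq m j; first by [].
by rewrite (ord3_other ij jk ik mi mj) bk.
Qed.

Lemma dist_edge_points O f i j k b b' l l' :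
  (forall i j, i != j -> dot (f i) (f j) = 0) -> i != j -> j != k -> i != k ->
  dist (O + \sum_m edge_coord i b l m *: f m)
       (O + \sum_m edge_coord j b' l' m *: f m) ^+ 2 =
    (l - (b' i)%:R) ^+ 2 * dot (f i) (f i) + (l' - (b j)%:R) ^+ 2 * dot (f j) (f j)
  + ((b k)%:R - (b' k)%:R) ^+ 2 * dot (f k) (f k).
Proof.
move=> orth ij jk ik; rewrite dist_frame // (big_ord3_perm _ _ ij jk ik) /edge_coord.
rewrite !eqxx (negbTE ij) eq_sym (negbTE ij) (eq_sym k) (negbTE ik) (eq_sym k) (negbTE jk).
by rewrite -(sqrrN (_ - l')) opprB.
Qed.

Lemma bit_gap (u v : bool) (l : R) : u != v -> 0 <= l <= 1 ->
  exists2 x, 0 <= x <= 1 & (l - u%:R) ^+ 2 = x ^+ 2 /\ (l - v%:R) ^+ 2 = (1 - x) ^+ 2.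
Proof.
case: u; case: v => //= _ /andP[l0 l1]; [exists (1 - l) | exists l];
  rewrite ?subr0; try (split; ring); apply/andP; split; lra.
Qed.

Lemma sqr_bit_sub (u v : bool) : u != v -> (u%:R - v%:R : R) ^+ 2 = 1.
Proof. by case: u; case: v => //= _; rewrite ?subr0 ?sub0r ?sqrrN expr1n. Qed.

Lemma brick_admissible f i j k : is_brick f -> brick_volume f = 1 ->
  (forall m, 1 / Num.sqrt 2 <= enorm (f m)) -> i != j -> j != k -> i != k ->
  admissible (dot (f i) (f i)) (dot (f j) (f j)) (dot (f k) (f k)).
Proof.
move=> _ hvol hlen ij jk ik.
have sq m : dot (f m) (f m) = enorm (f m) ^+ 2 by rewrite sqr_sqrtr ?dot_ge0.
have half m : 1/2 <= dot (f m) (f m).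
  have e : (1 / Num.sqrt 2 : R) ^+ 2 = 1/2 by rewrite expr_div_n expr1n sqr_sqrtr.
  by rewrite sq -e ler_sqr ?nnegrE ?hlen ?divr_ge0 ?sqrtr_ge0.
split; rewrite ?half // !sq -!exprMn.
by move: hvol; rewrite /brick_volume (big_ord3_perm _ _ ij jk ik) => ->; rewrite expr1n.
Qed.

End Edges.

Theorem mainTheorem2 (R : realType) (O : 'rV[R]_3) (f : 'I_3 -> 'rV[R]_3)
    (i1 i2 i3 : 'I_3) (b1 b2 b3 : 'I_3 -> bool) (A B C : 'rV[R]_3) (s : R) :
  is_brick f ->
  brick_volume f = 1 ->
  (forall i, 1 / Num.sqrt 2 <= enorm (f i)) ->
  i1 != i2 -> i2 != i3 -> i1 != i3 ->
  ~ meets (brick_edge O f i1 b1) (brick_edge O f i2 b2) ->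
  ~ meets (brick_edge O f i2 b2) (brick_edge O f i3 b3) ->
  ~ meets (brick_edge O f i1 b1) (brick_edge O f i3 b3) ->
  brick_edge O f i1 b1 A -> brick_edge O f i2 b2 B -> brick_edge O f i3 b3 C ->
  0 < s -> dist A B = s -> dist B C = s -> dist C A = s ->
  s <= Num.sqrt 2.
Proof.
move=> brick hvol hlen i12 i23 i13 skew12 skew23 skew13 hA hB hC _ dAB dBC dCA.
have [i21 i32 i31] : [/\ i2 != i1, i3 != i2 & i3 != i1].
  by rewrite eq_sym i12 eq_sym i23 eq_sym i13.
have hadm := brick_admissible brick hvol hlen i12 i23 i13.
have b12 : b1 i3 != b2 i3 by apply/eqP => /(meets_brick_edges O f i12 i23 i13)/skew12.
have b23 : b2 i1 != b3 i1 by apply/eqP => /(meets_brick_edges O f i23 i31 i21)/skew23.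
have b31 : b3 i2 != b1 i2 by apply/eqP => /esym/(meets_brick_edges O f i13 i32 i12)/skew13.
have [l1 hl1 eA] := brick_edgeP hA; have [l2 hl2 eB] := brick_edgeP hB.
have [l3 hl3 eC] := brick_edgeP hC; subst A B C.
have [x hx [x1 x2]] := bit_gap b23 hl1.
have [y hy [y1 y2]] := bit_gap b31 hl2.
have [z hz [z1 z2]] := bit_gap b12 hl3.
have := dist_edge_points O b1 b2 l1 l2 brick.2 i12 i23 i13.
have := dist_edge_points O b2 b3 l2 l3 brick.2 i23 i31 i21.
have := dist_edge_points O b3 b1 l3 l1 brick.2 i31 i12 i32.
rewrite dAB dBC dCA x1 x2 y1 y2 z1 z2.
rewrite !(sqr_bit_sub _ b12, sqr_bit_sub _ b23, sqr_bit_sub _ b31) => eCA eBC eAB.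
have hs : s ^+ 2 <= 2.
  rewrite leNgt; apply/negP => hs.
  by apply: (not_long_sides hadm hx (unit_compl hy) (unit_compl hz)); split; lra.
exact: le_sqrt_of_sqr.
Qed.
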